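(* Let $E$ be a non-empty set and let $S:(E\times[0,1]\times\{0,1\})^*\to(-\infty,\infty]$ be a forecast-continuous supermartingale. Then for any $T\ge1$ and any $e_1,\dots,e_T\in E$, $\pi_1,\dots,\pi_{T-1}\in[0,1]$, $\omega_1,\dots,\omega_{T-1}\in\{0,1\}$, there exists $\pi\in[0,1]$ such that for both $\omega=0$ and $\omega=1$, $$S(e_1,\pi_1,\omega_1,\dots,e_{T-1},\pi_{T-1},\omega_{T-1},e_T,\pi,\omega)\le S(e_1,\pi_1,\omega_1,\dots,e_{T-1},\pi_{T-1},\omega_{T-1}).$$
   Context: $(E\times[0,1]\times\{0,1\})^*$ denotes the set of finite sequences of triples. A function $S:(E\times[0,1]\times\{0,1\})^*\to(-\infty,\infty]$ is a (game-theoretic) supermartingale if for any $T$, any $e_1,\dots,e_T\in E$, any $\pi_1,\dots,\pi_T\in[0,1]$ and any $\omega_1,\dots,\omega_{T-1}\in\{0,1\}$, $\pi_T S(e_1,\pi_1,\omega_1,\dots,e_T,\pi_T,1)+(1-\pi_T)S(e_1,\pi_1,\omega_1,\dots,e_T,\pi_T,0)\le S(e_1,\pi_1,\omega_1,\dots,e_{T-1},\pi_{T-1},\omega_{T-1})$. It is forecast-continuous if for all $T\ge1$, all $e_1,\dots,e_T\in E$, all $\pi_1,\dots,\pi_{T-1}\in[0,1]$ and all $\omega_1,\dots,\omega_T\in\{0,1\}$, the map $\pi\mapsto S(e_1,\pi_1,\omega_1,\dots,e_{T-1},\pi_{T-1},\omega_{T-1},e_T,\pi,\omega_T)$ is continuous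 on $[0,1]$. *)

From HB Require Import structures.
From mathcomp Require Import all_boot all_order all_algebra.
From mathcomp Require Import all_classical all_reals all_analysis.
Set Implicit Arguments. Unset Strict Implicit. Unset Printing Implicit Defensive.
Import Order.TTheory GRing.Theory Num.Theory.
Local Open Scope classical_set_scope.
Local Open Scope ring_scope.

(* Histories are finite sequences of triples (e_t, pi_t, omega_t), listed in
   chronological order (earliest first); omega_t : bool encodes {0,1}
   (true = 1, false = 0). *)

Definition hist_ok (R : realType) (E : Type) (h : seq (E * R * bool)) : bool :=
  all (fun t => (0 <= t.1.2) && (t.1.2 <= 1)) h.

Definition no_neg_infty (R : realType) (E : Type)
  (S : seq (E * R * bool) -> \bar R) : Prop :=
  forall h, hist_ok h -> S h != -oo%E.

Definition supermartingale (R : realType) (E : Type)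
  (S : seq (E * R * bool) -> \bar R) : Prop :=
  forall (h : seq (E * R * bool)) (e : E) (p : R),
    hist_ok h -> 0 <= p <= 1 ->
    (p%:E * S (rcons h (e, p, true)) + (1 - p)%:E * S (rcons h (e, p, false))
       <= S h)%E.

Definition forecast_continuous (R : realType) (E : Type)
  (S : seq (E * R * bool) -> \bar R) : Prop :=
  forall (h : seq (E * R * bool)) (e : E) (w : bool),
    hist_ok h ->
    {within `[0, 1], continuous (fun p : R => S (rcons h (e, p, w)))}.

From HB Require Import structures.
From mathcomp Require Import all_boot all_order all_algebra.
From mathcomp Require Import all_classical all_reals all_analysis.
From mathcomp Require Import ring.
Set Implicit Arguments. Unset Strict Implicit. Unset Printing Implicit Defensive.
Import Order.TTheory GRing.Theory Num.Theory numFieldNormedType.Exports.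
Local Open Scope classical_set_scope.
Local Open Scope ring_scope.

(* Let c be the (finite) current capital and f_w p the capital after forecast
   p and outcome w.  The supermartingale inequality says that a
   p-weighted average of f_1 p and f_0 p is at most c, so at every p one of
   them is at most c; at p = 0 it is f_0 and at p = 1 it is f_1.  By
   forecast-continuity both sets {p | f_w p <= c} are closed in [0,1]; they
   cover the connected interval [0,1] and are nonempty, hence they meet. *)

Lemma within_continuous_ereal_gt (R : realType) (a b : R) (f : R -> \bar R)
    (c : \bar R) (x : R) :
  {within `[a, b], continuous f} -> x \in `[a, b] -> (c < f x)%E ->
  \forall p \near x, p \in `[a, b] -> (c < f p)%E.
Proof.
move=> /subspace_continuousP fC xab cfx.
exact: fC x xab [set y | (c < y)%E] (open_ereal_gt' cfx).
Qed.

Lemma segment_sublevels_meet (R : realType) (a b : R) (f g : R -> \bar R)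
    (c : \bar R) :
  a <= b ->
  {within `[a, b], continuous f} -> {within `[a, b], continuous g} ->
  (g a <= c)%E -> (f b <= c)%E ->
  (forall p, p \in `[a, b] -> (f p <= c)%E \/ (g p <= c)%E) ->
  exists2 p, p \in `[a, b] & (f p <= c)%E /\ (g p <= c)%E.
Proof.
move=> ab fC gC ga fb fg; apply: contrapT => nofg.
have aab : a \in `[a, b] by rewrite bound_itvE.
have bab : b \in `[a, b] by rewrite bound_itvE.
have fgt p : p \in `[a, b] -> (g p <= c)%E -> (c < f p)%E.
  by move=> pab gp; rewrite ltNge; apply/negP => fp; apply: nofg; exists p.
have := (connectedP _).1 (@segment_connected R a b)
  (fun w => [set p | p \in `[a, b] /\ ((g p <= c)%E = w)]).
apply; split.
- case; first by exists a; split=> //; apply/idP.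
  exists b; split=> //; apply/negbTE/negP => /(fgt b bab).
  by rewrite ltNge fb.
- apply/seteqP; split=> p /=; last by case=> -[].
  by move=> pab; case: (boolP (g p <= c)%E) => gp; [right|left].
- split; apply/seteqP; split=> x //=.
  + move=> [clx [xab gx]].
    have /clx [p [[pab /negbT gp]]] :=
      within_continuous_ereal_gt fC xab (fgt x xab gx).
    rewrite ltNge => /(_ pab) /negP fp.
    by case: (fg p pab) => // gp'; rewrite gp' in gp.
  + move=> [[xab /negbT gx] clx].
    rewrite -ltNge in gx.
    have /clx [p [[pab gp]]] := within_continuous_ereal_gt gC xab gx.
    by move=> /(_ pab); rewrite ltNge gp.
Qed.

Lemma ereal_convex_le_or (R : realType) (p : R) (x y : \bar R) (c : R) :
  p \in `[0, 1] -> (p%:E * x + (1 - p)%:E * y <= c%:E)%E ->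
  (x <= c%:E)%E \/ (y <= c%:E)%E.
Proof.
rewrite in_itv /= => /andP[p0 p1] hle; apply: contrapT => /not_orP[/negP xc /negP yc].
rewrite -ltNge in xc; rewrite -ltNge in yc.
move: p0; rewrite le_eqVlt => /orP[/eqP p0|p0].
  by move: hle; rewrite -p0 mul0e add0e subr0 mul1e leNgt yc.
move: p1; rewrite le_eqVlt => /orP[/eqP p1|p1].
  by move: hle; rewrite p1 mul1e subrr mul0e adde0 leNgt xc.
move: hle; apply/negP; rewrite -ltNge.
have -> : c%:E = (p%:E * c%:E + (1 - p)%:E * c%:E)%E.
  by rewrite -!EFinM -EFinD; congr EFin; ring.
by apply: lteD; rewrite lte_pmul2l // lte_fin subr_gt0.
Qed.

Theorem lemma1 (R : realType) (E : Type) (hE : inhabited E)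
  (S : seq (E * R * bool) -> \bar R)
  (hS : no_neg_infty S) (hsup : supermartingale S)
  (hcont : forecast_continuous S)
  (h : seq (E * R * bool)) (e : E) :
  hist_ok h ->
  exists p : R, 0 <= p <= 1 /\
    forall w : bool, (S (rcons h (e, p, w)) <= S h)%E.
Proof.
move=> hh; case Sh: (S h) => [c| |]; last first.
- by have := hS h hh; rewrite Sh.
- by exists 0; split=> [|w]; rewrite ?lexx ?ler01 ?leey.
pose f w p := S (rcons h (e, p, w)).
have avg p : p \in `[0, 1] ->
    (p%:E * f true p + (1 - p)%:E * f false p <= c%:E)%E.
  by rewrite in_itv /= -Sh => p01; exact: hsup.
have [in0 in1] : (0 : R) \in `[0, 1] /\ (1 : R) \in `[0, 1].
  by rewrite !bound_itvE ler01.
have f0 : (f false 0%R <= c%:E)%E.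
  by have := avg 0 in0; rewrite mul0e add0e subr0 mul1e.
have f1 : (f true 1%R <= c%:E)%E.
  by have := avg 1 in1; rewrite mul1e subrr mul0e adde0.
have [p p01 [f1p f0p]] := segment_sublevels_meet ler01 (hcont h e true hh)
  (hcont h e false hh) f0 f1 (fun p p01 => ereal_convex_le_or p01 (avg p p01)).
by exists p; split; [rewrite in_itv /= in p01 | case].
Qed.
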